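(* In the setting described in the context, for any sequence of constant pairs $(\eta_{n,1},\eta_{n,2})_{n=0}^{n_0}\in\mathbb{C}^{2(n_0+1)}$ the following are equivalent: (1) there exists a solution $\varphi$ on $\mathbb{R}$ of $(P-\lambda)\varphi=0$ with $\varphi=\eta_{n,1}g_n+\eta_{n,2}\bar g_n$ for every $n=0,1,\dots,n_0$; (2) the state $\Psi$ given by $\Psi(n)=(\eta_{n,1},\eta_{n-1,2})^T$ for $1\le n\le n_0$, $\Psi(-\infty)=\eta_{0,1}$, $\Psi(+\infty)=\eta_{n_0,2}$ satisfies $\mathcal{U}\Psi=\Psi$.
   Context: Let $h>0$, $P(h)=-h^2\frac{d^2}{dx^2}+V(x)$ on $\mathbb{R}$ with $V$ continuous and real-valued, and fix $\lambda>0$. Let $n_0\ge2$ and let $g_0,\dots,g_{n_0}$ be solutions of $(P-\lambda)g=0$ on $\mathbb{R}$ such that each pair $(g_n,\bar g_n)$ is a basis of the solution space, the Wronskian $\mathcal{W}(g_n,\bar g_n)$ is independent of $n$, and $(g_{n-1},\bar g_n)$ is linearly independent for each $1\le n\le n_0$. Define $T_n$ ($1\le n\le n_0$) by $(g_{n-1},\bar g_{n-1})T_n=(g_n,\bar g_n)$; then $T_n\in\mathcal{T}:=\{T=(t_{jk})\in SL(2,\mathbb{C}): t_{11}=\overline{t_{22}},\ t_{12}=\overline{t_{21}}\}$. Define $\mathcal{M}:\mathcal{T}\to\mathcal{S}:=\{M\in U(2): m_{11}=m_{22}\ne0\}$ by $\mathcal{M}\begin{pmatrix}p&\bar q\\ q&\bar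 p\end{pmatrix}=\frac1{\bar p}\begin{pmatrix}1&\bar q\\-q&1\end{pmatrix}$ and $U_n:=\mathcal{M}(T_n)$. Set $P_n:=\begin{pmatrix}1&0\\0&0\end{pmatrix}U_n$, $Q_n:=\begin{pmatrix}0&0\\0&1\end{pmatrix}U_n$. A state $\Psi$ consists of $\Psi(n)=(\Psi_1(n),\Psi_2(n))^T\in\mathbb{C}^2$ for $1\le n\le n_0$ and scalars $\Psi(\pm\infty)\in\mathbb{C}$. The evolution $\mathcal{U}$ is: $(\mathcal{U}\Psi)(n)=P_{n+1}\Psi(n+1)+Q_{n-1}\Psi(n-1)$ for $2\le n\le n_0-1$; $(\mathcal{U}\Psi)(-\infty)=(1,0)U_1\Psi(1)$; $(\mathcal{U}\Psi)(+\infty)=(0,1)U_{n_0}\Psi(n_0)$; $(\mathcal{U}\Psi)(1)=P_2\Psi(2)+(0,\Psi_2(1))^T$; $(\mathcal{U}\Psi)(n_0)=(\Psi_1(n_0),0)^T+Q_{n_0-1}\Psi(n_0-1)$. *)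

From Stdlib Require Import Reals Arith.
From Coquelicot Require Import Coquelicot.
Open Scope R_scope.

Notation CC := Complex.C.

Definition conjf (f : R -> CC) : R -> CC := fun x => Cconj (f x).

(* f solves (P - lam) f = 0 on R, with P = -h^2 d^2/dx^2 + V *)
Definition is_sol (h : R) (V : R -> R) (lam : R) (f : R -> CC) : Prop :=
  exists f' f'' : R -> CC,
    forall x, is_derive f x (f' x) /\ is_derive f' x (f'' x) /\
      (- RtoC (h ^ 2) * f'' x + RtoC (V x) * f x = RtoC lam * f x)%C.

Definition lin_indep (f1 f2 : R -> CC) : Prop :=
  forall a b : CC, (forall x, (a * f1 x + b * f2 x)%C = (RtoC 0)) -> a = (RtoC 0) /\ b = (RtoC 0).

Definition is_basis h V lam (f1 f2 : R -> CC) : Prop :=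
  is_sol h V lam f1 /\ is_sol h V lam f2 /\ lin_indep f1 f2 /\
  forall phi, is_sol h V lam phi ->
    exists a b : CC, forall x, phi x = (a * f1 x + b * f2 x)%C.

Definition wronskian_is (f g w : R -> CC) : Prop :=
  forall x, exists fx gx : CC,
    is_derive f x fx /\ is_derive g x gx /\ w x = (f x * gx - fx * g x)%C.

Record mat2 := Mat2 { m11 : CC; m12 : CC; m21 : CC; m22 : CC }.

Definition mulv (M : mat2) (v : CC * CC) : CC * CC :=
  ((m11 M * fst v + m12 M * snd v)%C, (m21 M * fst v + m22 M * snd v)%C).

Definition addv (v w : CC * CC) : CC * CC := ((fst v + fst w)%C, (snd v + snd w)%C).

Definition transfer_rel (gprev gnext : R -> CC) (T : mat2) : Prop :=
  forall x,
    gnext x = (gprev x * m11 T + Cconj (gprev x) * m21 T)%C /\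
    Cconj (gnext x) = (gprev x * m12 T + Cconj (gprev x) * m22 T)%C.

(* M [[p, conj q],[q, conj p]] = (1 / conj p) [[1, conj q],[-q, 1]],
   written with the entries of T: conj p = t22, conj q = t12, q = t21. *)
Definition scatM (T : mat2) : mat2 :=
  Mat2 (/ m22 T)%C (/ m22 T * m12 T)%C (/ m22 T * - m21 T)%C (/ m22 T)%C.

Definition Pproj (M : mat2) (v : CC * CC) : CC * CC := (fst (mulv M v), (RtoC 0)).
Definition Qproj (M : mat2) (v : CC * CC) : CC * CC := ((RtoC 0), snd (mulv M v)).

Record state := State { psi : nat -> CC * CC; psi_minf : CC; psi_pinf : CC }.

Definition evolve (n0 : nat) (T : nat -> mat2) (S : state) : state :=
  let U n := scatM (T n) in
  State
    (fun n =>
       if Nat.eqb n 1 then addv (Pproj (U 2%nat) (psi S 2%nat)) ((RtoC 0), snd (psi S 1%nat))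
       else if Nat.eqb n n0 then addv (fst (psi S n0), (RtoC 0)) (Qproj (U (n0 - 1)%nat) (psi S (n0 - 1)%nat))
       else addv (Pproj (U (n + 1)%nat) (psi S (n + 1)%nat)) (Qproj (U (n - 1)%nat) (psi S (n - 1)%nat)))
    (fst (mulv (U 1%nat) (psi S 1%nat)))
    (snd (mulv (U n0) (psi S n0))).

Definition state_eq (n0 : nat) (S1 S2 : state) : Prop :=
  (forall n, (1 <= n <= n0)%nat -> psi S1 n = psi S2 n) /\
  psi_minf S1 = psi_minf S2 /\ psi_pinf S1 = psi_pinf S2.

Definition state_of (n0 : nat) (eta : nat -> CC * CC) : state :=
  State (fun n => (fst (eta n), snd (eta (n - 1)%nat))) (fst (eta 0%nat)) (snd (eta n0)).

From Stdlib Require Import Reals Arith Lra Lia.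
From Coquelicot Require Import Coquelicot.
Open Scope R_scope.

(* Writing a solution as e_1 g_n + e_2 conj(g_n) with coordinates e in C^2,
   the transfer relation (g_{n-1}, conj g_{n-1}) T_n = (g_n, conj g_n) says that
   one function has coordinates eta_n in every basis exactly when
   eta_{n-1} = T_n eta_n for 1 <= n <= n0.  On the other side, U Psi = Psi for
   the state built from eta means that each site n scatters its incoming
   amplitudes (eta_{n,1}, eta_{n-1,2}) through U_n = M(T_n) into the outgoing
   ones (eta_{n-1,1}, eta_{n,2}).  A direct computation shows these two local
   conditions agree as soon as T_n is in SL(2, C) with t22 <> 0.
   The file first develops calculus for C-valued functions and uniqueness for
   the Cauchy problem (an energy estimate), giving nonvanishing Wronskians of
   a basis; this yields t22 <> 0 and det T_n = 1.  Then the global picture is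
   reduced to the local relations on both sides, and the theorem follows. *)

Lemma is_derive_linear_comp {V W : NormedModule R_AbsRing} (L : V -> W) (f : R -> V) x l :
  is_linear L -> is_derive f x l -> is_derive (fun t => L (f t)) x (L l).
Proof.
  intros HL Hf.
  eapply filterdiff_ext_lin.
  - apply filterdiff_comp; [exact Hf | apply filterdiff_linear; exact HL].
  - intros y. apply (linear_scal L HL).
Qed.

Lemma is_linear_Cmult (a : CC) :
  is_linear (U := C_R_NormedModule) (V := C_R_NormedModule) (fun z : CC => (a * z)%C).
Proof.
  split.
  - intros x y. apply Cmult_plus_distr_l.
  - intros k [x1 x2]. destruct a as [a1 a2].
    unfold scal; simpl; unfold prod_scal, Cmult; simpl.
    unfold scal; simpl; unfold mult; simpl. f_equal; ring.
  - exists (Cmod a + 1). split; [pose proof (Cmod_ge_0 a); lra |].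
    intros x. rewrite <- !Cmod_norm, Cmod_mult.
    pose proof (Cmod_ge_0 x). nra.
Qed.

Lemma is_derive_Cscal (f : R -> CC) x l (a : CC) :
  is_derive f x l -> is_derive (fun t => (a * f t)%C) x (a * l)%C.
Proof. exact (is_derive_linear_comp _ f x l (is_linear_Cmult a)). Qed.

Lemma is_derive_lin_comb (f g : R -> CC) x l1 l2 (a b : CC) :
  is_derive f x l1 -> is_derive g x l2 ->
  is_derive (fun t => (a * f t + b * g t)%C) x (a * l1 + b * l2)%C.
Proof.
  intros Df Dg.
  exact (is_derive_plus _ _ x _ _ (is_derive_Cscal f x l1 a Df) (is_derive_Cscal g x l2 b Dg)).
Qed.

Lemma is_derive_re (f : R -> CC) x l : is_derive f x l -> is_derive (fun t => fst (f t)) x (fst l).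
Proof. exact (is_derive_linear_comp _ f x l (@is_linear_fst R_AbsRing R_NormedModule R_NormedModule)). Qed.

Lemma is_derive_im (f : R -> CC) x l : is_derive f x l -> is_derive (fun t => snd (f t)) x (snd l).
Proof. exact (is_derive_linear_comp _ f x l (@is_linear_snd R_AbsRing R_NormedModule R_NormedModule)). Qed.

Lemma is_derive_C_unique (f : R -> CC) x l1 l2 : is_derive f x l1 -> is_derive f x l2 -> l1 = l2.
Proof.
  intros D1 D2. destruct l1 as [p1 q1], l2 as [p2 q2].
  pose proof (is_derive_unique _ _ _ (is_derive_re _ _ _ D1)) as Re1.
  pose proof (is_derive_unique _ _ _ (is_derive_re _ _ _ D2)) as Re2.
  pose proof (is_derive_unique _ _ _ (is_derive_im _ _ _ D1)) as Im1.
  pose proof (is_derive_unique _ _ _ (is_derive_im _ _ _ D2)) as Im2.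
  simpl in *. f_equal; congruence.
Qed.

(* E = u^2 + u'^2 satisfies |E'| <= C E on compacts, hence the
   weighted energy E(t) exp(-+C (t - x0)) cannot leave 0. *)

Lemma energy_rate_bound (u v k : R) :
  Rabs (2 * u * v + 2 * v * (k * u)) <= (1 + Rabs k) * (u * u + v * v).
Proof.
  replace (2 * u * v + 2 * v * (k * u)) with ((2 * u * v) * (1 + k)) by ring.
  rewrite Rabs_mult.
  assert (Huv : Rabs (2 * u * v) <= u * u + v * v).
  { apply Rabs_le. pose proof (pow2_ge_0 (u + v)); pose proof (pow2_ge_0 (u - v)). split; nra. }
  assert (Hk : Rabs (1 + k) <= 1 + Rabs k).
  { eapply Rle_trans; [apply Rabs_triang | rewrite Rabs_R1; lra]. }
  rewrite Rmult_comm. apply Rmult_le_compat; auto using Rabs_pos.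
Qed.

Lemma weighted_energy_derive (u u1 u2 : R -> R) (a x0 t : R) :
  is_derive u t (u1 t) -> is_derive u1 t (u2 t) ->
  is_derive (fun s => (u s * u s + u1 s * u1 s) * exp (a * (s - x0))) t
    ((2 * u t * u1 t + 2 * u1 t * u2 t + a * (u t * u t + u1 t * u1 t)) * exp (a * (t - x0))).
Proof.
  intros Du Du1.
  assert (Dexp : is_derive (fun s => exp (a * (s - x0))) t (a * exp (a * (t - x0)))).
  { auto_derive; [exact I |]. unfold Rminus. ring. }
  assert (Dsq : forall f f' : R -> R, is_derive f t (f' t) ->
            is_derive (fun s => f s * f s) t (2 * f t * f' t)).
  { intros f f' Df.
    replace (2 * f t * f' t) with (plus (mult (f' t) (f t)) (mult (f t) (f' t)))
      by (unfold plus, mult; simpl; ring).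
    exact (is_derive_mult f f _ _ _ Df Df Rmult_comm). }
  pose proof (is_derive_plus _ _ _ _ _ (Dsq u u1 Du) (Dsq u1 u2 Du1)) as Denergy.
  replace ((2 * u t * u1 t + 2 * u1 t * u2 t + a * (u t * u t + u1 t * u1 t)) * exp (a * (t - x0)))
    with (plus (mult (plus (2 * u t * u1 t) (2 * u1 t * u2 t)) (exp (a * (t - x0))))
               (mult (plus (u t * u t) (u1 t * u1 t)) (a * exp (a * (t - x0)))))
    by (unfold plus, mult; simpl; ring).
  exact (is_derive_mult _ _ _ _ _ Denergy Dexp Rmult_comm).
Qed.

Lemma nonpos_of_derive_sign (F F' : R -> R) (x0 x : R) :
  (forall c, is_derive F c (F' c)) -> F x0 = 0 ->
  (forall c, Rabs (c - x0) <= Rabs (x - x0) -> F' c * (x - x0) <= 0) -> F x <= 0.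
Proof.
  intros DF F0 Hsign.
  destruct (MVT_cor4 F F' x0 (Rabs (x - x0)) (fun c _ => DF c) x (Rle_refl _)) as [c [Hc Hcx]].
  rewrite F0, Rminus_0_r in Hc. rewrite Hc. exact (Hsign c Hcx).
Qed.

Lemma ode_zero_data_real (k u u1 u2 : R -> R) (x0 : R) :
  (forall x, continuity_pt k x) ->
  (forall x, is_derive u x (u1 x)) -> (forall x, is_derive u1 x (u2 x)) ->
  (forall x, u2 x = k x * u x) -> u x0 = 0 -> u1 x0 = 0 -> forall x, u x = 0.
Proof.
  intros Hk Du Du1 Heq Hu0 Hu10 x.
  set (d := Rabs (x - x0)).
  set (E := fun t => u t * u t + u1 t * u1 t).
  assert (HE0 : forall t, 0 <= E t) by (intros t; unfold E; nra).
  destruct (continuity_ab_maj (fun c => Rabs (k c)) (x0 - d) (x0 + d))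
    as [m [Hm _]].
  { unfold d; pose proof (Rabs_pos (x - x0)); lra. }
  { intros c _. apply (continuity_pt_comp k Rabs); [apply Hk | apply Rcontinuity_abs]. }
  set (C := 1 + Rabs (k m)).
  assert (Hrate : forall c, Rabs (c - x0) <= d ->
            Rabs (2 * u c * u1 c + 2 * u1 c * u2 c) <= C * E c).
  { intros c Hc. rewrite Heq. eapply Rle_trans; [apply energy_rate_bound |].
    apply Rmult_le_compat_r; [apply HE0 |].
    assert (Rabs (k c) <= Rabs (k m)) by (apply Hm; apply Rabs_le_between' in Hc; lra).
    unfold C; lra. }
  (* the weight exp (a (t - x0)) with a = -C forward in time, a = C backward *)
  assert (Hweight : exists a, forall c, Rabs (c - x0) <= d ->
            (2 * u c * u1 c + 2 * u1 c * u2 c + a * E c) * (x - x0) <= 0).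
  { destruct (Rle_or_lt x0 x) as [Hx | Hx].
    - exists (- C). intros c Hc. pose proof (Hrate c Hc) as R.
      apply Rabs_le_between in R. apply Rmult_le_0_r; lra.
    - exists C. intros c Hc. pose proof (Hrate c Hc) as R.
      apply Rabs_le_between in R. nra. }
  destruct Hweight as [a Ha].
  assert (Hneg : E x * exp (a * (x - x0)) <= 0).
  { apply (nonpos_of_derive_sign (fun t => E t * exp (a * (t - x0)))
      (fun t => (2 * u t * u1 t + 2 * u1 t * u2 t + a * E t) * exp (a * (t - x0))) x0 x).
    - intros c. apply weighted_energy_derive; auto.
    - unfold E. rewrite Hu0, Hu10. ring.
    - intros c Hc. pose proof (Ha c Hc). pose proof (exp_pos (a * (c - x0))).
      replace ((2 * u c * u1 c + 2 * u1 c * u2 c + a * E c) * exp (a * (c - x0)) * (x - x0))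
        with ((2 * u c * u1 c + 2 * u1 c * u2 c + a * E c) * (x - x0) * exp (a * (c - x0)))
        by ring.
      apply Rmult_le_0_r; lra. }
  pose proof (exp_pos (a * (x - x0))). pose proof (HE0 x).
  assert (E x = 0) by nra. unfold E in *. nra.
Qed.

Lemma is_sol_lin_comb h V lam (f g : R -> CC) (a b : CC) :
  is_sol h V lam f -> is_sol h V lam g -> is_sol h V lam (fun x => (a * f x + b * g x)%C).
Proof.
  intros [f1 [f2 Hf]] [g1 [g2 Hg]].
  exists (fun x => (a * f1 x + b * g1 x)%C), (fun x => (a * f2 x + b * g2 x)%C).
  intros x. destruct (Hf x) as [Df [Df1 Ef]], (Hg x) as [Dg [Dg1 Eg]].
  split; [| split]; try (apply is_derive_lin_comb; assumption).
  transitivity (a * (- RtoC (h ^ 2) * f2 x + RtoC (V x) * f x)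
                + b * (- RtoC (h ^ 2) * g2 x + RtoC (V x) * g x))%C; [ring |].
  rewrite Ef, Eg. ring.
Qed.

Lemma sol_second_derivative (h vx lam : R) (F F2 : CC) : h <> 0 ->
  (- RtoC (h ^ 2) * F2 + RtoC vx * F = RtoC lam * F)%C ->
  F2 = (RtoC ((vx - lam) / h ^ 2) * F)%C.
Proof.
  intros Hh E. assert (Hh2 : h ^ 2 <> 0) by (apply pow_nonzero; exact Hh).
  assert (Hh2C : RtoC (h ^ 2) <> RtoC 0) by (intros HC; apply Hh2; injection HC; auto).
  rewrite RtoC_div by exact Hh2.
  replace F2 with ((- RtoC (h ^ 2) * F2 + RtoC vx * F - RtoC vx * F) / - RtoC (h ^ 2))%C
    by (field; exact Hh2C).
  rewrite E, RtoC_minus. field. exact Hh2C.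
Qed.

Lemma is_sol_zero_data h V lam (f : R -> CC) x0 :
  0 < h -> (forall x, continuous V x) -> is_sol h V lam f ->
  f x0 = RtoC 0 -> is_derive f x0 (RtoC 0) -> forall x, f x = RtoC 0.
Proof.
  intros Hh HV [f1 [f2 Hf]] F0 DF0 x.
  assert (F10 : f1 x0 = RtoC 0) by (apply (is_derive_C_unique f x0); [apply Hf | exact DF0]).
  set (k := fun y => (V y - lam) / h ^ 2).
  assert (Hk : forall y, continuity_pt k y).
  { intros y. apply continuity_pt_div.
    - apply continuity_pt_minus; [apply continuity_pt_filterlim, HV | apply continuity_pt_const; intros ? ?; reflexivity].
    - apply continuity_pt_const; intros ? ?; reflexivity.
    - apply pow_nonzero; lra. }
  assert (Hf2 : forall y, f2 y = (RtoC (k y) * f y)%C).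
  { intros y. destruct (Hf y) as [_ [_ E]]. apply (sol_second_derivative h (V y) lam); [lra | exact E]. }
  (* real and imaginary parts solve u'' = k u with zero data *)
  assert (Hpart : forall p : CC -> R, is_linear (U := C_R_NormedModule) (V := R_NormedModule) p ->
            (forall r z, p (RtoC r * z)%C = r * p z) -> p (RtoC 0) = 0 -> p (f x) = 0).
  { intros p Hp Hscal Hp0.
    apply (ode_zero_data_real k (fun t => p (f t)) (fun t => p (f1 t)) (fun t => p (f2 t)) x0 Hk).
    - intros y. apply (is_derive_linear_comp p f y _ Hp). apply Hf.
    - intros y. apply (is_derive_linear_comp p f1 y _ Hp). apply Hf.
    - intros y. simpl. rewrite Hf2. apply Hscal.
    - rewrite F0. exact Hp0.
    - rewrite F10. exact Hp0. }
  assert (Re0 : fst (f x) = 0).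
  { apply (Hpart fst (@is_linear_fst R_AbsRing R_NormedModule R_NormedModule)); [| reflexivity].
    intros r [p q]; simpl; ring. }
  assert (Im0 : snd (f x) = 0).
  { apply (Hpart snd (@is_linear_snd R_AbsRing R_NormedModule R_NormedModule)); [| reflexivity].
    intros r [p q]; simpl; ring. }
  destruct (f x) as [p q]. simpl in Re0, Im0. subst. reflexivity.
Qed.

(* If a solution basis (f, g) had a vanishing Wronskian at x0, suitable
   combinations with zero data at x0 would force f(x0) = g(x0) = 0, then
   f'(x0) = g'(x0) = 0, so f itself would vanish, contradicting independence. *)
Lemma wronskian_nonzero h V lam (f g : R -> CC) x0 (fx gx : CC) :
  0 < h -> (forall x, continuous V x) ->
  is_sol h V lam f -> is_sol h V lam g -> lin_indep f g ->
  is_derive f x0 fx -> is_derive g x0 gx -> (f x0 * gx - fx * g x0)%C <> RtoC 0.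
Proof.
  intros Hh HV Sf Sg Hi Df Dg W0.
  assert (Hcomb : forall a b : CC, (a * f x0 + b * g x0 = RtoC 0)%C ->
            (a * fx + b * gx = RtoC 0)%C -> a = RtoC 0 /\ b = RtoC 0).
  { intros a b E0 E1. apply Hi.
    apply (is_sol_zero_data h V lam _ x0 Hh HV (is_sol_lin_comb h V lam f g a b Sf Sg) E0).
    rewrite <- E1. apply is_derive_lin_comb; assumption. }
  destruct (Hcomb (g x0) (- f x0)%C) as [G0 F0].
  { ring. }
  { transitivity (- (f x0 * gx - fx * g x0))%C; [ring | rewrite W0; ring]. }
  assert (Fx0 : f x0 = RtoC 0) by (replace (f x0) with (- (- f x0))%C by ring; rewrite F0; ring).
  destruct (Hcomb gx (- fx)%C) as [DG0 DF0].
  { rewrite Fx0, G0. ring. }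
  { ring. }
  assert (Dfx0 : fx = RtoC 0) by (replace fx with (- (- fx))%C by ring; rewrite DF0; ring).
  destruct (Hcomb (RtoC 1) (RtoC 0)) as [One _].
  { rewrite Fx0. ring. }
  { rewrite Dfx0. ring. }
  apply (f_equal fst) in One. simpl in One. lra.
Qed.

(* Transfer matrices.  [expand e f] is the solution e1 f + e2 conj(f); the
   relation (g_{n-1}, conj g_{n-1}) T_n = (g_n, conj g_n) turns coordinates in
   the n-th basis into coordinates in the (n-1)-th one by e |-> T_n e. *)

Definition expand (e : CC * CC) (f : R -> CC) (x : R) : CC :=
  (fst e * f x + snd e * Cconj (f x))%C.

Definition det2 (M : mat2) : CC := (m11 M * m22 M - m12 M * m21 M)%C.

Lemma expand_transfer (gp gn : R -> CC) (T : mat2) (e : CC * CC) x :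
  transfer_rel gp gn T -> expand e gn x = expand (mulv T e) gp x.
Proof.
  intros HT. destruct (HT x) as [Gn Gn']. unfold expand, mulv; simpl.
  rewrite Gn', Gn. ring.
Qed.

Lemma expand_unique (f : R -> CC) (e e' : CC * CC) :
  lin_indep f (conjf f) -> (forall x, expand e f x = expand e' f x) -> e = e'.
Proof.
  intros Hi He. destruct e as [a b], e' as [c d].
  destruct (Hi (a - c)%C (b - d)%C) as [E1 E2].
  - intros x. unfold conjf. transitivity (expand (a, b) f x - expand (c, d) f x)%C.
    + unfold expand; simpl. ring.
    + rewrite He. ring.
  - f_equal.
    + replace a with ((a - c) + c)%C by ring. rewrite E1. ring.
    + replace b with ((b - d) + d)%C by ring. rewrite E2. ring.
Qed.

Lemma is_sol_expand h V lam (f : R -> CC) (e : CC * CC) :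
  is_sol h V lam f -> is_sol h V lam (conjf f) -> is_sol h V lam (expand e f).
Proof. exact (is_sol_lin_comb h V lam f (conjf f) (fst e) (snd e)). Qed.

(* Independence of (g_{n-1}, conj g_n) is exactly what makes t22 invertible,
   so that the scattering matrix M(T_n) is defined. *)
Lemma transfer_m22_nonzero (gp gn : R -> CC) (T : mat2) :
  transfer_rel gp gn T -> lin_indep gp (conjf gn) -> m22 T <> RtoC 0.
Proof.
  intros HT Hi E. destruct (Hi (m12 T) (- RtoC 1)%C) as [_ Hb].
  - intros x. destruct (HT x) as [_ Gn']. unfold conjf. rewrite Gn', E. ring.
  - apply (f_equal fst) in Hb. simpl in Hb. lra.
Qed.

Lemma wronskian_transfer (gp gn : R -> CC) (T : mat2) x (dp dp' dn dn' : CC) :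
  transfer_rel gp gn T ->
  is_derive gp x dp -> is_derive (conjf gp) x dp' ->
  is_derive gn x dn -> is_derive (conjf gn) x dn' ->
  (gn x * dn' - dn * conjf gn x)%C = (det2 T * (gp x * dp' - dp * conjf gp x))%C.
Proof.
  intros HT Dp Dp' Dn Dn'.
  assert (Gn : forall t, gn t = (m11 T * gp t + m21 T * conjf gp t)%C).
  { intros t. destruct (HT t) as [E _]. rewrite E. unfold conjf. ring. }
  assert (Gn' : forall t, conjf gn t = (m12 T * gp t + m22 T * conjf gp t)%C).
  { intros t. destruct (HT t) as [_ E]. unfold conjf. rewrite E. ring. }
  assert (En : dn = (m11 T * dp + m21 T * dp')%C).
  { apply (is_derive_C_unique gn x); [exact Dn |].
    eapply is_derive_ext; [intros t; symmetry; apply Gn |].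
    exact (is_derive_lin_comb _ _ x _ _ _ _ Dp Dp'). }
  assert (En' : dn' = (m12 T * dp + m22 T * dp')%C).
  { apply (is_derive_C_unique (conjf gn) x); [exact Dn' |].
    eapply is_derive_ext; [intros t; symmetry; apply Gn' |].
    exact (is_derive_lin_comb _ _ x _ _ _ _ Dp Dp'). }
  rewrite En, En', Gn, Gn'. unfold det2. ring.
Qed.

(* Equal nonvanishing Wronskians force T in SL(2, C). *)
Lemma transfer_det_one h V lam (gp gn w : R -> CC) (T : mat2) :
  0 < h -> (forall x, continuous V x) ->
  is_sol h V lam gp -> is_sol h V lam (conjf gp) -> lin_indep gp (conjf gp) ->
  wronskian_is gp (conjf gp) w -> wronskian_is gn (conjf gn) w ->
  transfer_rel gp gn T -> det2 T = RtoC 1.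
Proof.
  intros Hh HV Sp Sp' Hi Wp Wn HT.
  destruct (Wp 0) as [dp [dp' [Dp [Dp' Ep]]]].
  destruct (Wn 0) as [dn [dn' [Dn [Dn' En]]]].
  assert (Hw : w 0 <> RtoC 0).
  { rewrite Ep. exact (wronskian_nonzero h V lam _ _ 0 dp dp' Hh HV Sp Sp' Hi Dp Dp'). }
  rewrite (wronskian_transfer gp gn T 0 dp dp' dn dn' HT Dp Dp' Dn Dn'), <- Ep in En.
  replace (det2 T) with (det2 T * w 0 / w 0)%C by (field; exact Hw).
  rewrite <- En. field. exact Hw.
Qed.

Lemma scattering_iff_transfer (T : mat2) (e e' : CC * CC) :
  m22 T <> RtoC 0 -> det2 T = RtoC 1 ->
  (mulv (scatM T) (fst e, snd e') = (fst e', snd e) <-> e' = mulv T e).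
Proof.
  destruct T as [a b c d], e as [x1 x2], e' as [y1 y2].
  unfold mulv, scatM, det2; simpl. intros Hd Hdet.
  assert (Ha : a = ((RtoC 1 + b * c) / d)%C) by (rewrite <- Hdet; field; exact Hd).
  subst a. split; intros E; injection E as E1 E2.
  - subst y1 x2. f_equal; field; exact Hd.
  - subst y1 y2. f_equal; field; exact Hd.
Qed.

Lemma solution_iff_transfer h V lam (n0 : nat) (g : nat -> R -> CC) (T : nat -> mat2)
    (eta : nat -> CC * CC) :
  (forall n, (n <= n0)%nat -> is_basis h V lam (g n) (conjf (g n))) ->
  (forall n, (1 <= n <= n0)%nat -> transfer_rel (g (n - 1)%nat) (g n) (T n)) ->
  ((exists phi : R -> CC, is_sol h V lam phi /\
      forall n, (n <= n0)%nat -> forall x, phi x = expand (eta n) (g n) x)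
   <-> forall k, (1 <= k <= n0)%nat -> eta (k - 1)%nat = mulv (T k) (eta k)).
Proof.
  intros Hbas Htr. split.
  - intros [phi [_ Hphi]] k Hk.
    destruct (Hbas (k - 1)%nat ltac:(lia)) as [_ [_ [Hi _]]].
    apply (expand_unique _ _ _ Hi). intros x.
    rewrite <- (expand_transfer _ _ _ _ x (Htr k Hk)), <- !Hphi by lia. reflexivity.
  - intros Hrel.
    assert (Hdown : forall m, (m <= n0)%nat -> forall x,
              expand (eta n0) (g n0) x = expand (eta (n0 - m)%nat) (g (n0 - m)%nat) x).
    { induction m as [| m IH]; intros Hm x.
      - rewrite Nat.sub_0_r. reflexivity.
      - rewrite IH by lia.
        replace (n0 - S m)%nat with (n0 - m - 1)%nat by lia.
        rewrite (Hrel (n0 - m)%nat) by lia.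
        apply expand_transfer, Htr. lia. }
    exists (expand (eta n0) (g n0)). split.
    + destruct (Hbas n0 (le_n n0)) as [S [S' _]]. exact (is_sol_expand h V lam _ _ S S').
    + intros n Hn x. rewrite (Hdown (n0 - n)%nat) by lia.
      replace (n0 - (n0 - n))%nat with n by lia. reflexivity.
Qed.

(* The evolution U, read off componentwise on the state built from eta: site n
   receives the left-going output of site n+1 and the right-going output of
   site n-1 (at the ends, the reflecting boundary keeps its own amplitude). *)

Lemma evolve_fst (n0 : nat) (T : nat -> mat2) (S : state) (n : nat) :
  (1 <= n < n0)%nat ->
  fst (psi (evolve n0 T S) n) = fst (mulv (scatM (T (n + 1)%nat)) (psi S (n + 1)%nat)).
Proof.
  intros Hn. unfold evolve; simpl.
  destruct (Nat.eqb_spec n 1) as [E | E]; [subst n; simpl; apply Cplus_0_r |].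
  destruct (Nat.eqb_spec n n0) as [E' | E']; [lia |]. simpl. apply Cplus_0_r.
Qed.

Lemma evolve_fst_last (n0 : nat) (T : nat -> mat2) (S : state) :
  (2 <= n0)%nat -> fst (psi (evolve n0 T S) n0) = fst (psi S n0).
Proof.
  intros Hn0. unfold evolve; simpl.
  destruct (Nat.eqb_spec n0 1) as [E | E]; [lia |].
  rewrite Nat.eqb_refl. simpl. apply Cplus_0_r.
Qed.

Lemma evolve_snd (n0 : nat) (T : nat -> mat2) (S : state) (n : nat) :
  (1 < n <= n0)%nat ->
  snd (psi (evolve n0 T S) n) = snd (mulv (scatM (T (n - 1)%nat)) (psi S (n - 1)%nat)).
Proof.
  intros Hn. unfold evolve; simpl.
  destruct (Nat.eqb_spec n 1) as [E | E]; [lia |].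
  destruct (Nat.eqb_spec n n0) as [E' | E']; subst; simpl; apply Cplus_0_l.
Qed.

Lemma evolve_snd_first (n0 : nat) (T : nat -> mat2) (S : state) :
  snd (psi (evolve n0 T S) 1) = snd (psi S 1).
Proof. unfold evolve; simpl. apply Cplus_0_l. Qed.

Lemma fixed_point_iff_local_scattering (n0 : nat) (T : nat -> mat2) (eta : nat -> CC * CC) :
  (2 <= n0)%nat ->
  (state_eq n0 (evolve n0 T (state_of n0 eta)) (state_of n0 eta) <->
   forall k, (1 <= k <= n0)%nat ->
     mulv (scatM (T k)) (fst (eta k), snd (eta (k - 1)%nat)) = (fst (eta (k - 1)%nat), snd (eta k))).
Proof.
  intros Hn0. set (S := state_of n0 eta). split.
  - intros [Hpsi [Hminf Hpinf]] k Hk.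
    apply injective_projections.
    + destruct (Nat.eq_dec k 1) as [-> | Hk1]; [exact Hminf |].
      transitivity (fst (psi (evolve n0 T S) (k - 1)%nat)).
      * rewrite evolve_fst by lia. replace (k - 1 + 1)%nat with k by lia. reflexivity.
      * rewrite Hpsi by lia. reflexivity.
    + destruct (Nat.eq_dec k n0) as [-> | Hkn]; [exact Hpinf |].
      transitivity (snd (psi (evolve n0 T S) (k + 1)%nat)).
      * rewrite evolve_snd by lia. replace (k + 1 - 1)%nat with k by lia. reflexivity.
      * rewrite Hpsi by lia. simpl. replace (k + 1 - 1)%nat with k by lia. reflexivity.
  - intros Hloc. split; [intros n Hn | split].
    + apply injective_projections.
      * destruct (Nat.eq_dec n n0) as [-> | Hnn0]; [apply evolve_fst_last; exact Hn0 |].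
        rewrite evolve_fst by lia.
        transitivity (fst (fst (eta (n + 1 - 1)%nat), snd (eta (n + 1)%nat))).
        -- exact (f_equal fst (Hloc (n + 1)%nat ltac:(lia))).
        -- simpl. replace (n + 1 - 1)%nat with n by lia. reflexivity.
      * destruct (Nat.eq_dec n 1) as [-> | Hn1]; [apply evolve_snd_first |].
        rewrite evolve_snd by lia.
        exact (f_equal snd (Hloc (n - 1)%nat ltac:(lia))).
    + exact (f_equal fst (Hloc 1%nat ltac:(lia))).
    + exact (f_equal snd (Hloc n0 ltac:(lia))).
Qed.

Theorem mainTheorem4 (h : R) (V : R -> R) (lam : R) (n0 : nat)
  (g : nat -> R -> CC) (T : nat -> mat2) (eta : nat -> CC * CC) :
  0 < h ->
  (forall x, continuous V x) ->
  0 < lam ->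
  (2 <= n0)%nat ->
  (forall n, (n <= n0)%nat -> is_basis h V lam (g n) (conjf (g n))) ->
  (exists w : R -> CC, forall n, (n <= n0)%nat -> wronskian_is (g n) (conjf (g n)) w) ->
  (forall n, (1 <= n <= n0)%nat -> lin_indep (g (n - 1)%nat) (conjf (g n))) ->
  (forall n, (1 <= n <= n0)%nat -> transfer_rel (g (n - 1)%nat) (g n) (T n)) ->
  ((exists phi : R -> CC, is_sol h V lam phi /\
      forall n, (n <= n0)%nat -> forall x,
        phi x = (fst (eta n) * g n x + snd (eta n) * Cconj (g n x))%C)
   <->
   state_eq n0 (evolve n0 T (state_of n0 eta)) (state_of n0 eta)).
Proof.
  intros Hh HV _ Hn0 Hbas [w Hw] Hli Htr.
  (* each T_k lies in SL(2, C) with t22 <> 0, so its scattering matrix is defined *)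
  assert (Hscat : forall k, (1 <= k <= n0)%nat ->
            (mulv (scatM (T k)) (fst (eta k), snd (eta (k - 1)%nat))
               = (fst (eta (k - 1)%nat), snd (eta k))
             <-> eta (k - 1)%nat = mulv (T k) (eta k))).
  { intros k Hk. apply scattering_iff_transfer.
    - exact (transfer_m22_nonzero _ _ _ (Htr k Hk) (Hli k Hk)).
    - destruct (Hbas (k - 1)%nat ltac:(lia)) as [S [S' [Hi _]]].
      apply (transfer_det_one h V lam (g (k - 1)%nat) (g k) w); auto.
      all: apply Hw; lia. }
  transitivity (forall k, (1 <= k <= n0)%nat -> eta (k - 1)%nat = mulv (T k) (eta k)).
  - exact (solution_iff_transfer h V lam n0 g T eta Hbas Htr).
  - rewrite fixed_point_iff_local_scattering by exact Hn0.
    split; intros H k Hk; apply (Hscat k Hk), H, Hk.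
Qed.
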